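(* Let $\mathbf{F}$ be a field of characteristic $2$, $m\ge1$, and let $A\in\{0,1\}^m$ with $|A|\ge 3$. Then $$\sum_{0<L<A} x^{A-L}\,\mathrm{Tr}(L)\in\ker(\pi).$$ Moreover, let $i=\ell(A)$ and $j=\ell(A')$. Then for every $L$ with $0<L<A$, $$\mathrm{LT}\big(\pi(x^{A-L}\mathrm{Tr}(L))\big)\le x_i x_j\, y^{(A')'}$$ (in the graded reverse lexicographic order with $y_1>x_1>y_2>x_2>\cdots>y_m>x_m$), with equality if and only if $A-L=\Delta_i$ or $A-L=\Delta_j$.
   Context: Let $S=\mathbf{F}[x_1,y_1,\dots,x_m,y_m]$ with the $\mathbf{F}$-algebra automorphism $\sigma(x_i)=x_i$, $\sigma(y_i)=y_i+x_i$ of order 2, and let $S^{C_2}$ be the ring of $\sigma$-invariants. For $A=(a_1,\dots,a_m)\in\mathbb{N}^m$ write $x^A=\prod_s x_s^{a_s}$, $y^A=\prod_s y_s^{a_s}$, $N^A=\prod_s N_s^{a_s}$ where $N_s=y_s^2+x_sy_s$, and $|A|=\sum_s a_s$. $A\le B$ means componentwise $\le$; $L<A$ means $L\le A$, $L\ne A$. $\Delta_s$ is the sequence with $1$ in position $s$ and $0$ elsewhere. For $A\in\{0,1\}^m$, $\mathrm{tr}(A)=y^A+\prod_s(y_s+x_s)^{a_s}\in S^{C_2}$. For $A\ne0$, $\ell(A)=\min\{\ell:a_\ell=1\}$ and $A'$ is $A$ with the entry at position $\ell(A)$ set to $0$. Let $R=\mathbf{F}[x_1,\dots,x_m,N_1,\dots,N_m]$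 be a polynomial ring in $2m$ indeterminates and $Q=R[\mathrm{Tr}(A): A\in\{0,1\}^m, |A|\ge2]$ a polynomial ring over $R$ in the indeterminates $\mathrm{Tr}(A)$. Let $\pi:Q\to S^{C_2}$ be the $\mathbf{F}$-algebra homomorphism with $\pi(x_i)=x_i$, $\pi(N_i)=y_i^2+x_iy_i$, $\pi(\mathrm{Tr}(A))=\mathrm{tr}(A)$. Convention: for $C\in\{0,1\}^m$ with $|C|\le 1$, $\mathrm{Tr}(C)$ denotes the element of $Q$ given by $\mathrm{Tr}(0)=0$ and $\mathrm{Tr}(\Delta_s)=x_s$ (so that $\pi(\mathrm{Tr}(C))=\mathrm{tr}(C)$ for all $C\in\{0,1\}^m$). $\mathrm{LT}$ denotes the lead term. *)

From HB Require Import structures.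
From mathcomp Require Import all_boot all_order all_algebra.
From mathcomp Require Import mpoly.
Set Implicit Arguments. Unset Strict Implicit. Unset Printing Implicit Defensive.
Import Order.TTheory GRing.Theory.
Local Open Scope ring_scope.

Section Defs.
Variables (F : fieldType) (m : nat).

(* Elements of {0,1}^m are represented by subsets of 'I_m (their supports).
   |A| = #|A|, A <= B is A \subset B, x^A, y^A are products over A. *)

(* S = F[x_1,y_1,...,x_m,y_m]: variables indexed by 'I_(m + m);
   x_s = 'X_(lshift m s), y_s = 'X_(rshift m s). *)
Definition Svar := 'I_(m + m).
Definition S := {mpoly F[m + m]}.
Definition xv (s : 'I_m) : Svar := lshift m s.
Definition yv (s : 'I_m) : Svar := rshift m s.
Definition Sx (s : 'I_m) : S := 'X_(xv s).
Definition Sy (s : 'I_m) : S := 'X_(yv s).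

Definition tr (A : {set 'I_m}) : S :=
  \prod_(s in A) Sy s + \prod_(s in A) (Sy s + Sx s).

(* Q = F[x_1..x_m, N_1..N_m][Tr(A) : |A| >= 2]: variables indexed by
   'I_(m + m + #|TrIdx|): x_s = lshift, N_s = lshift (rshift), and Tr(B)
   for B in TrIdx is rshift (m+m) j where enum_val j = B. *)
Definition TrIdx : {set {set 'I_m}} := [set B : {set 'I_m} | 2 <= #|B|]%N.
Definition Qn := (m + m + #|TrIdx|)%N.
Definition Q := {mpoly F[Qn]}.
Definition Qx (s : 'I_m) : Q := 'X_(lshift #|TrIdx| (lshift m s)).
Definition QN (s : 'I_m) : Q := 'X_(lshift #|TrIdx| (rshift m s)).
Definition QTrVar (j : 'I_#|TrIdx|) : Q := 'X_(rshift (m + m) j).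

(* Tr(C) in Q, for every C in {0,1}^m, with the convention Tr(0) = 0 and
   Tr(Delta_s) = x_s. *)
Definition QTr (C : {set 'I_m}) : Q :=
  if (#|C| <= 1)%N then
    (if [pick s in C] is Some s then Qx s else 0)
  else
    (if [pick j : 'I_#|TrIdx| | enum_val j == C] is Some j then QTrVar j else 0).

Definition Qxpow (A : {set 'I_m}) : Q := \prod_(s in A) Qx s.
Definition Sxpow (A : {set 'I_m}) : S := \prod_(s in A) Sx s.

Definition pi_img (v : 'I_Qn) : S :=
  match split v with
  | inl w => match split w with
             | inl s => Sx s
             | inr s => Sy s ^+ 2 + Sx s * Sy s
             end
  | inr j => tr (enum_val j)
  end.
Definition piQ (p : Q) : S := mmap (@mpolyC _ F) pi_img p.

(* is_ell A i : i = ell(A) = min{l : a_l = 1}; then A' = A :\ i. *)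
Definition is_ell (A : {set 'I_m}) (i : 'I_m) : bool :=
  (i \in A) && [forall k in A, (i <= k)%N].

(* Graded reverse lexicographic order with y_1 > x_1 > y_2 > x_2 > ... .
   rank: y_s has rank 2s, x_s has rank 2s+1; higher rank = smaller variable. *)
Definition vrank (v : Svar) : nat :=
  match split v with inl s => (2 * s).+1 | inr s => 2 * s end.

Definition grevlex_lt (a b : 'X_{1..m + m}) : bool :=
  (mdeg a < mdeg b)%N ||
  ((mdeg a == mdeg b) &&
   [exists k : Svar, (b k < a k)%N &&
      [forall k' : Svar, (vrank k < vrank k')%N ==> (a k' == b k')]]).
Definition grevlex_le (a b : 'X_{1..m + m}) : bool := (a == b) || grevlex_lt a b.

Definition lead_mono (p : S) : 'X_{1..m + m} :=
  foldr (fun a b => if grevlex_lt b a then a else b) 0%MM (msupp p).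
Definition lead_term (p : S) : S := p@_(lead_mono p) *: 'X_[lead_mono p].

Definition xxy (i j : 'I_m) (B : {set 'I_m}) : 'X_{1..m + m} :=
  (U_(xv i) + U_(xv j) + \sum_(s in B) U_(yv s))%MM.

End Defs.

Arguments Sx {F m}. Arguments Sy {F m}. Arguments tr {F m}.
Arguments Qx {F m}. Arguments QN {F m}. Arguments QTrVar {F m}.
Arguments QTr {F m}. Arguments Qxpow {F m}. Arguments Sxpow {F m}.
Arguments piQ {F m}. Arguments pi_img {F m}.
Arguments lead_mono {F m}. Arguments lead_term {F m}.

(* In characteristic 2, expanding prod_(s in A) (y_s + x_s) and prod_(s in A) y_s
   = prod_(s in A) ((y_s + x_s) + x_s) over the subsets L of A and adding gives
   sum_(L <= A) x^(A-L) tr(L) = tr(A); the terms L = 0 and L = A are 0 and tr(A),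
   so the remaining ones add up to 0.
   Likewise x^(A-L) tr(L) is the sum of the distinct monomials y^K x^(A-K),
   K < L.  They all have degree |A|, and grevlex compares two of them at the
   largest index where the K's differ, the one with y there being larger.  Hence
   the leading monomial is given by K = L minus its least element, and among
   all K with |A-K| >= 2 the largest is K = (A')' = A minus its two least
   elements i and j; the two coincide exactly when A - L is Delta_i or Delta_j. *)

From HB Require Import structures.
From mathcomp Require Import all_boot all_order all_algebra.
From mathcomp Require Import mpoly.
Set Implicit Arguments. Unset Strict Implicit. Unset Printing Implicit Defensive.
Import Order.TTheory GRing.Theory.
Local Open Scope ring_scope.

Lemma prod_add_subsets (R : comNzRingType) (I : finType) (A : {set I}) (a b : I -> R) :
  \prod_(i in A) (a i + b i) =
  \sum_(J : {set I} | J \subset A) \prod_(i in J) a i * \prod_(i in A :\: J) b i.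
Proof.
pose f i := if i \in A then a i else 0.
pose g i := if i \in A then b i else 1.
rewrite big_mkcond (eq_bigr (fun i => f i + g i)) => [|i _]; last first.
  by rewrite /f /g; case: (i \in A); rewrite ?add0r.
rewrite bigA_distr [RHS]big_mkcond; apply: eq_bigr => J _.
case: ifP => [JA | /negbT/subsetPn[i iJ iA]]; last first.
  by rewrite (bigD1 i) //= iJ /f (negbTE iA) mul0r.
rewrite [\prod_(i in J) _]big_mkcond [\prod_(i in A :\: J) _]big_mkcond -big_split.
apply: eq_bigr => i _; rewrite /f /g inE.
case: (boolP (i \in J)) => [iJ | _] /=; first by rewrite (subsetP JA _ iJ) mulr1.
by case: (i \in A); rewrite mul1r.
Qed.

Lemma sum_eq_in (T : finType) (K : {set T}) (s : T) :
  (\sum_(t in K) (t == s))%N = (s \in K).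
Proof.
case: (boolP (s \in K)) => [sK | sK]; last first.
  by rewrite big1 // => t tK; apply/eqP; rewrite eqb0; apply: contraNneq sK => <-.
by rewrite (bigD1 s) //= eqxx big1 // => t /andP[_ /negbTE ->].
Qed.

Section CharTwo.
Variables (F : fieldType) (m : nat).
Hypothesis F2 : (2 \in [pchar F])%N.

Local Notation S := (S F m).
Local Notation Q := (Q F m).

HB.instance Definition _ :=
  GRing.RMorphism.copy (@piQ F m) (mmap (@mpolyC _ F) (@pi_img F m)).

Fact pchar2_S : (2 \in [pchar S])%N.
Proof. by rewrite (pchar_lalg S). Qed.

Lemma piQX (v : 'I_(Qn m)) : piQ ('X_v : Q) = pi_img v.
Proof. by rewrite /piQ mmapX mmap1U. Qed.

Lemma piQ_x s : piQ (Qx s : Q) = Sx s.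
Proof. by rewrite piQX /pi_img !(unsplitK (inl _)). Qed.

Lemma tr_set0 : tr set0 = 0 :> S.
Proof. by rewrite /tr !big_set0 (addrr_pchar2 pchar2_S). Qed.

Lemma tr_set1 s : tr [set s] = Sx s :> S.
Proof. by rewrite /tr !big_set1 addrA (addrr_pchar2 pchar2_S) add0r. Qed.

Lemma piQ_Tr (L : {set 'I_m}) : piQ (QTr L : Q) = tr L.
Proof.
rewrite /QTr; case: ifP => L1.
  case: pickP => [s sL | L0].
    have -> : L = [set s] by apply/eqP; rewrite eq_sym eqEcard sub1set sL cards1.
    by rewrite piQ_x tr_set1.
  have -> : L = set0 by apply/setP => s; rewrite inE L0.
  by rewrite rmorph0 tr_set0.
have TL : L \in TrIdx m by rewrite inE ltnNge L1.
case: pickP => [j /eqP <- | Lnot]; first by rewrite piQX /pi_img (unsplitK (inr _)).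
by have := Lnot (enum_rank_in TL L); rewrite enum_rankK_in ?eqxx.
Qed.

Lemma piQ_xpow_Tr (X L : {set 'I_m}) :
  piQ (Qxpow X * QTr L : Q) = Sxpow X * tr L.
Proof.
rewrite rmorphM rmorph_prod /= piQ_Tr //.
by congr (_ * _); apply: eq_bigr => s _; rewrite piQ_x.
Qed.

Lemma sum_xpow_tr (A : {set 'I_m}) :
  \sum_(L : {set 'I_m} | L \subset A) Sxpow (A :\: L) * tr L = tr A :> S.
Proof.
rewrite [RHS]/tr (prod_add_subsets _ Sy Sx).
have -> : \prod_(s in A) Sy s = \prod_(s in A) (Sy s + Sx s + Sx s) :> S.
  by apply: eq_bigr => s _; rewrite -addrA (addrr_pchar2 pchar2_S) addr0.
rewrite (prod_add_subsets _ (fun s => Sy s + Sx s)) -big_split /=.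
by apply: eq_bigr => L _; rewrite /tr /Sxpow mulrDr addrC !(mulrC (\prod_(s in A :\: L) _)).
Qed.

Lemma piQ_sum_xpow_Tr_proper (A : {set 'I_m}) : A != set0 ->
  piQ (\sum_(L : {set 'I_m} | (L != set0) && (L \proper A))
        Qxpow (A :\: L) * QTr L : Q) = 0.
Proof.
move=> A0; rewrite rmorph_sum /=.
under eq_bigr do rewrite piQ_xpow_Tr.
apply: (@addIr _ (tr A)); rewrite add0r -{2}(sum_xpow_tr A).
rewrite [RHS](bigD1 A) //= [in RHS](bigD1 set0) /=; last by rewrite sub0set eq_sym.
rewrite tr_set0 mulr0 add0r setDv /Sxpow big_set0 mul1r addrC.
congr (_ + _); apply: eq_bigl => L.
by rewrite properEneq andbC [(L != A) && _]andbC.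
Qed.

Lemma tr_expand (L : {set 'I_m}) : tr L =
  \sum_(K : {set 'I_m} | K \proper L) \prod_(s in K) Sy s * \prod_(s in L :\: K) Sx s
  :> S.
Proof.
rewrite /tr prod_add_subsets (bigD1 L) //= setDv big_set0 mulr1 addrA.
rewrite (addrr_pchar2 pchar2_S) add0r; apply: eq_bigl => K.
by rewrite properEneq andbC.
Qed.

End CharTwo.

Section Monomials.
Variable m : nat.
Implicit Types (A K : {set 'I_m}) (s : 'I_m).

Definition ymono A K : 'X_{1..m + m} :=
  (\sum_(s in K) U_(yv s) + \sum_(s in A :\: K) U_(xv s))%MM.

Lemma ymono_y A K s : ymono A K (yv s) = (s \in K).
Proof.
rewrite mnmDE !mnm_sumE [X in (_ + X)%N]big1 => [|t _]; last by rewrite mnm1E eq_lrshift.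
by rewrite addn0 -sum_eq_in; apply: eq_bigr => t _; rewrite mnm1E eq_rshift.
Qed.

Lemma ymono_x A K s : ymono A K (xv s) = (s \in A :\: K).
Proof.
rewrite mnmDE !mnm_sumE big1 => [|t _]; last by rewrite mnm1E eq_rlshift.
by rewrite add0n -sum_eq_in; apply: eq_bigr => t _; rewrite mnm1E eq_lshift.
Qed.

Lemma ymono_inj A : injective (ymono A).
Proof.
move=> K K' eqKK'; apply/setP => s.
by have := ymono_y A K s; rewrite eqKK' ymono_y; case: (s \in K); case: (s \in K').
Qed.

Lemma mdeg_ymono A K : K \subset A -> mdeg (ymono A K) = #|A|.
Proof.
move=> KA; rewrite mdegD !mdeg_sum.
under eq_bigr do rewrite mdeg1. under [X in (_ + X)%N]eq_bigr do rewrite mdeg1.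
by rewrite !sum1_card -(cardsID K A) (setIidPr KA).
Qed.

Lemma Svar_cases (k : Svar m) : exists s, k = xv s \/ k = yv s.
Proof. by rewrite -(splitK k); case: (split k) => s; exists s; [left | right]. Qed.

Lemma vrank_x s : vrank (xv s) = (2 * s).+1.
Proof. by rewrite /vrank (unsplitK (inl _)). Qed.

Lemma vrank_y s : vrank (yv s) = (2 * s)%N.
Proof. by rewrite /vrank (unsplitK (inr _)). Qed.

Lemma vrank_inj : injective (@vrank m).
Proof.
move=> k k'; have [s [] ->] := Svar_cases k; have [s' [] ->] := Svar_cases k';
  rewrite ?vrank_x ?vrank_y => /eqP; rewrite ?eqSS ?eqn_mul2l //=;
  try by move=> /eqP/val_inj ->.
all: by move=> /eqP/(congr1 odd); rewrite /= !oddM.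
Qed.

Lemma grevlex_lt_asym (a b : 'X_{1..m + m}) : grevlex_lt a b -> ~~ grevlex_lt b a.
Proof.
rewrite /grevlex_lt => /orP[ltab | /andP[/eqP-> /existsP[k /andP[ltk eqk]]]].
  by rewrite negb_or -leqNgt ltnW //= (gtn_eqF ltab).
rewrite ltnn eqxx /=; apply/existsP => -[k' /andP[ltk' eqk']].
have [lt|gt|/vrank_inj eq] := ltngtP (vrank k) (vrank k').
- by move: ltk'; rewrite (eqP (implyP (forallP eqk k') lt)) ltnn.
- by move: ltk; rewrite (eqP (implyP (forallP eqk' k) gt)) ltnn.
- by move: ltk; rewrite eq ltnNge ltnW.
Qed.

Lemma exists_max_diff K K' : K != K' ->
  exists2 t : 'I_m, (t \in K) != (t \in K') &
    forall s : 'I_m, (t < s)%N -> (s \in K) = (s \in K').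
Proof.
move=> neqKK'; have [t0 Dt0] : exists t0 : 'I_m, (t0 \in K) != (t0 \in K').
  apply/existsP; apply: contraNT neqKK' => /existsPn eqK.
  by apply/eqP/setP => t; apply/eqP/negPn/eqK.
have [t Dt tmax] := @arg_maxnP _ t0 (fun t => (t \in K) != (t \in K')) val Dt0.
by exists t => // s ts; apply/eqP; apply: contraTT ts => /tmax; rewrite -leqNgt.
Qed.

(* The hypothesis says that the largest index t where K and K' differ lies in
   K'; the exponents then agree on all variables ranked after x_t, and x_t
   divides y^K x^(A\K) but not y^K' x^(A\K'). *)
Lemma grevlex_lt_ymono A K K' : K \subset A -> K' \subset A -> K != K' ->
  (forall t, t \in K -> t \notin K' ->
     exists2 s : 'I_m, (t < s)%N & (s \in K) != (s \in K')) ->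
  grevlex_lt (ymono A K) (ymono A K').
Proof.
move=> KA K'A neqKK' dominated; have [t Dt tmax] := exists_max_diff neqKK'.
have tK : t \notin K.
  apply/negP => tK; have tK' : t \notin K' by move: Dt; rewrite tK; case: (t \in K').
  by have [s ts] := dominated t tK tK'; rewrite tmax // eqxx.
have tK' : t \in K' by move: Dt; rewrite (negPf tK); case: (t \in K').
apply/orP; right; rewrite !mdeg_ymono // eqxx /=.
apply/existsP; exists (xv t); rewrite !ymono_x !inE tK tK' (subsetP K'A) //=.
apply/forallP => k; apply/implyP; have [s [] ->] := Svar_cases k.
  by rewrite !vrank_x ltnS ltn_mul2l /= => ts; rewrite !ymono_x !inE tmax.
rewrite vrank_x vrank_y => ts; rewrite !ymono_y tmax //.
by rewrite -(ltn_pmul2l (isT : 0 < 2)%N) (ltn_trans _ ts).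
Qed.

End Monomials.

Section Expansion.
Variables (F : fieldType) (m : nat).
Hypothesis F2 : (2 \in [pchar F])%N.
Implicit Types A K L : {set 'I_m}.

Lemma mpolyX_ymono A K :
  'X_[ymono A K] = \prod_(s in K) Sy s * \prod_(s in A :\: K) Sx s :> S F m.
Proof. by rewrite mpolyXD !(big_morph _ (@mpolyXD _ _) (@mpolyX0 _ _)). Qed.

Lemma xpow_tr_expand A L : L \subset A ->
  Sxpow (A :\: L) * tr L = \sum_(K : {set 'I_m} | K \proper L) 'X_[ymono A K] :> S F m.
Proof.
move=> LA; rewrite tr_expand // mulr_sumr; apply: eq_bigr => K /proper_sub KL.
rewrite mpolyX_ymono [\prod_(s in A :\: K) _](big_setID L) /=.
rewrite setIDAC (setIidPr LA) setDDl (setUidPr KL).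
by rewrite mulrCA (mulrC (Sxpow _)).
Qed.

End Expansion.


Section LeadingTerm.
Variables (F : fieldType) (m : nat).
Local Notation mono := ('X_{1..m + m}).
Local Notation grevlex_max := (fun a b : mono => if grevlex_lt b a then a else b).

Lemma foldr_grevlex_max_in (s : seq mono) z : foldr grevlex_max z s \in z :: s.
Proof.
elim: s => [|a s IH] /=; first exact: mem_head.
case: ifP => _; first by rewrite !inE eqxx orbT.
by move: IH; rewrite !inE => /orP[-> | ->]; rewrite ?orbT.
Qed.

Lemma foldr_grevlex_max (s : seq mono) z M : M \in s ->
  {in z :: s, forall M', M' != M -> grevlex_lt M' M} -> foldr grevlex_max z s = M.
Proof.
elim: s => //= a s IH; rewrite inE => Ms ltM.
have ltMs : {in z :: s, forall M', M' != M -> grevlex_lt M' M}.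
  by move=> M'; rewrite inE => /predU1P[-> | M's]; apply: ltM; rewrite !inE ?eqxx ?M's ?orbT.
case: (boolP (M \in s)) => [M's | M'ns].
  rewrite (IH M's ltMs); case: (eqVneq a M) => [-> | aM]; first by rewrite if_same.
  by rewrite (negPf (grevlex_lt_asym (ltM a _ aM))) // !inE eqxx orbT.
have {Ms M'ns} -> : a = M by case/predU1P: Ms => // M's; rewrite M's in M'ns.
have := foldr_grevlex_max_in s z; set r := foldr _ _ _ => rs.
by case: (eqVneq r M) => [-> | rM]; rewrite ?if_same // ltMs.
Qed.

Lemma lead_mono_eq (p : S F m) M : p@_M != 0 -> (0 < mdeg M)%N ->
  (forall M', p@_M' != 0 -> M' != M -> grevlex_lt M' M) -> lead_mono p = M.
Proof.
move=> pM degM ltM; apply: foldr_grevlex_max; first by rewrite mcoeff_msupp.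
move=> M'; rewrite inE => /predU1P[-> _ | ]; first by rewrite /grevlex_lt mdeg0 degM.
by rewrite mcoeff_msupp; apply: ltM.
Qed.

Section SumOfMonomials.
Variables (T : finType) (P : pred T) (f : T -> mono) (t0 : T).
Hypotheses (f_inj : injective f) (Pt0 : P t0) (deg_ft0 : (0 < mdeg (f t0))%N).
Hypothesis ft0_max : forall t, P t -> t != t0 -> grevlex_lt (f t) (f t0).

Let p : S F m := \sum_(t | P t) 'X_[f t].

Lemma mcoeff_sum_mpolyX_max : p@_(f t0) = 1.
Proof.
rewrite raddf_sum (bigD1 t0) //= mcoeffX eqxx big1 ?addr0 // => t /andP[_ tt0].
by rewrite mcoeffX inj_eq // (negPf tt0).
Qed.

Lemma lead_mono_sum_mpolyX : lead_mono p = f t0.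
Proof.
apply: lead_mono_eq => [|//|M pM neqM]; first by rewrite mcoeff_sum_mpolyX_max oner_eq0.
case: (pickP (fun u => P u && (f u == M))) => [u /andP[Pu /eqP fuM] | none].
  by rewrite -fuM; apply: ft0_max => //; apply: contraNneq neqM => <-; rewrite fuM.
move: pM; rewrite raddf_sum big1 ?eqxx // => u Pu.
by rewrite /= mcoeffX; have := none u; rewrite /= Pu /= => ->.
Qed.

Lemma lead_term_sum_mpolyX : lead_term p = 'X_[f t0].
Proof. by rewrite /lead_term lead_mono_sum_mpolyX mcoeff_sum_mpolyX_max scale1r. Qed.

End SumOfMonomials.

Lemma mpolyX_inj : injective (fun M : mono => 'X_[M] : S F m).
Proof.
move=> M M' /(congr1 (mcoeff M)); rewrite !mcoeffX eqxx.
by case: eqP => // _ /eqP; rewrite oner_eq0.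
Qed.

End LeadingTerm.

Section LeastElement.
Variable m : nat.
Implicit Types (A K L : {set 'I_m}) (i j l : 'I_m).

Lemma is_ellP A i : reflect (i \in A /\ forall k, k \in A -> (i <= k)%N) (is_ell A i).
Proof.
by apply: (iffP andP) => -[iA imin]; split => //; [move/forall_inP: imin | apply/forall_inP].
Qed.

Lemma exists_ell A : A != set0 -> exists i, is_ell A i.
Proof.
case/set0Pn => i0 Ai0; have [i Ai imin] := arg_minnP val Ai0.
by exists i; apply/is_ellP; split => // k /imin.
Qed.

Lemma is_ell_uniq A i i' : is_ell A i -> is_ell A i' -> i = i'.
Proof.
move=> /is_ellP[Ai imin] /is_ellP[Ai' imin']; apply: val_inj.
by apply/eqP; rewrite eqn_leq imin // imin'.
Qed.

Lemma is_ellS A K i : K \subset A -> i \in K -> is_ell A i -> is_ell K i.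
Proof.
move=> KA Ki /is_ellP[_ imin]; apply/is_ellP; split => // k /(subsetP KA); exact: imin.
Qed.

Lemma card_setD_setD1 A L l : L \proper A -> l \in L -> (1 < #|A :\: (L :\ l)|)%N.
Proof.
case/properP => LA [a Aa La] Ll; apply/card_gt1P; exists l, a.
rewrite !inE eqxx Aa (negPf La) andbF (subsetP LA) //; split => //.
by apply: contraNneq La => <-.
Qed.

Section LeadingSubset.
Variables (A L : {set 'I_m}) (l : 'I_m).
Hypotheses (LA : L \subset A) (Ll : is_ell L l).

Lemma grevlex_lt_ymono_setD1 K : K \proper L -> K != L :\ l ->
  grevlex_lt (ymono A K) (ymono A (L :\ l)).
Proof.
move=> KL neqK; have /is_ellP[lL lmin] := Ll.
apply: grevlex_lt_ymono => //; first exact: subset_trans (proper_sub KL) LA.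
  by rewrite (subset_trans (subD1set L l)).
move=> t Kt; rewrite !inE (subsetP (proper_sub KL)) // andbT negbK => /eqP tl.
have [_ [s Ls Ks]] := properP KL.
have ls : l != s by apply: contraNneq Ks => <-; rewrite -tl.
exists s; first by rewrite tl ltn_neqAle lmin // andbT.
by rewrite (negPf Ks) !inE Ls andbT [s == l]eq_sym (negPf ls).
Qed.

End LeadingSubset.

Section TwoLeast.
Variables (A : {set 'I_m}) (i j : 'I_m).
Hypotheses (Ai : is_ell A i) (Aj : is_ell (A :\ i) j).

Lemma ell2_spec : [/\ i \in A, j \in A, j != i & (i < j)%N].
Proof.
have /is_ellP[iA imin] := Ai; have /is_ellP[] := Aj; rewrite !inE => /andP[ji jA] _.
by split => //; rewrite ltn_neqAle imin // andbT eq_sym; apply: contra ji => /eqP/val_inj ->.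
Qed.

Lemma setD_setD1_ell2 : A :\: (A :\ i :\ j) = [set i; j].
Proof.
have [iA jA _ _] := ell2_spec; apply/setP => s; rewrite !inE.
case: (eqVneq s i) => [-> | _]; first by rewrite iA andbF.
by case: (eqVneq s j) => [-> | _] /=; rewrite ?jA ?andNb.
Qed.

Lemma xxy_ymono : xxy i j (A :\ i :\ j) = ymono A (A :\ i :\ j).
Proof.
have [_ _ ji _] := ell2_spec.
rewrite /ymono setD_setD1_ell2 big_setU1 ?big_set1 /= ?inE 1?eq_sym //.
by rewrite addmC.
Qed.

Lemma grevlex_le_ymono_ell2 K : K \subset A -> (1 < #|A :\: K|)%N ->
  grevlex_le (ymono A K) (ymono A (A :\ i :\ j)).
Proof.
move=> KA cardAK; have [iA jA ji ij] := ell2_spec; have /is_ellP[_ jmin] := Aj.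
have [-> | neqK] := eqVneq K (A :\ i :\ j); first by rewrite /grevlex_le eqxx.
apply/orP; right; apply: grevlex_lt_ymono => // [|t Kt].
  exact: subset_trans (subD1set _ _) (subD1set _ _).
rewrite !inE (subsetP KA t Kt) andbT negb_and !negbK => tji.
have /subsetPn[s sAK] : ~~ (A :\: K \subset [set i; j] :\ t).
  apply: contraL cardAK => /subset_leq_card le; rewrite -leqNgt (leq_trans le) //.
  have := cardsD1 t [set i; j]; rewrite cards2 eq_sym ji !inE orbC tji.
  by case=> ->.
have [sA Ks] := setDP sAK; rewrite !inE negb_and negbK => /orP[/eqP st | sij].
  by move: Ks; rewrite st Kt.
move: sij; rewrite negb_or => /andP[si sj].
have js : (j < s)%N by rewrite ltn_neqAle jmin ?inE ?si // andbT eq_sym.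
exists s; last by rewrite (negPf Ks) !inE si sj sA.
by case/orP: tji => /eqP ->; [exact: js | exact: ltn_trans ij js].
Qed.

Lemma setD1_ell_eq L l : L \subset A -> is_ell L l ->
  L :\ l = A :\ i :\ j <-> A :\: L = [set i] \/ A :\: L = [set j].
Proof.
move=> LA Ll; have [iA jA ji _] := ell2_spec; have /is_ellP[lL _] := Ll.
split=> [eqL | ].
  have AL : A :\: L = [set i; j] :\ l.
    by rewrite -setD_setD1_ell2 (setDDl A (A :\ i :\ j)) (setUC (A :\ i :\ j)) -eqL setD1K.
  have : l \in [set i; j] by rewrite -setD_setD1_ell2 -eqL !inE eqxx (subsetP LA).
  rewrite !inE AL => /orP[/eqP-> | /eqP->]; [right | left].
    by rewrite setU1K // inE eq_sym.
  by rewrite setUC setU1K // inE.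
have setDK X : A :\: L = X -> L = A :\: X.
  by move=> <-; rewrite setDDr setDv set0U (setIidPr LA).
case=> /setDK eqL; rewrite eqL in Ll *.
  by rewrite (is_ell_uniq Ll Aj).
have Ai' : is_ell (A :\ j) i by apply: is_ellS (subD1set _ _) _ Ai; rewrite !inE eq_sym ji.
by rewrite (is_ell_uniq Ll Ai') !setDDl setUC.
Qed.

End TwoLeast.

End LeastElement.

Section LeadingTermOfSummand.
Variables (F : fieldType) (m : nat) (A L : {set 'I_m}) (l : 'I_m).
Hypotheses (F2 : (2 \in [pchar F])%N) (LA : L \subset A) (Ll : is_ell L l).

Fact mdeg_ymono_setD1_gt0 : (0 < mdeg (ymono A (L :\ l)))%N.
Proof.
have /is_ellP[lL _] := Ll; rewrite mdeg_ymono; last exact: subset_trans (subD1set L l) LA.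
by rewrite card_gt0; apply/set0Pn; exists l; apply: (subsetP LA).
Qed.

Lemma lead_mono_xpow_tr :
  lead_mono (Sxpow (A :\: L) * tr L : S F m) = ymono A (L :\ l).
Proof.
rewrite xpow_tr_expand //; apply: lead_mono_sum_mpolyX.
- exact: ymono_inj.
- by rewrite properD1 //; case/is_ellP: Ll.
- exact: mdeg_ymono_setD1_gt0.
- exact: grevlex_lt_ymono_setD1.
Qed.

Lemma lead_term_xpow_tr :
  lead_term (Sxpow (A :\: L) * tr L : S F m) = 'X_[ymono A (L :\ l)].
Proof.
rewrite xpow_tr_expand //; apply: lead_term_sum_mpolyX.
- exact: ymono_inj.
- by rewrite properD1 //; case/is_ellP: Ll.
- exact: mdeg_ymono_setD1_gt0.
- exact: grevlex_lt_ymono_setD1.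
Qed.

End LeadingTermOfSummand.

Theorem mainTheorem2 (F : fieldType) (m : nat) (A : {set 'I_m}) :
  (2 \in [pchar F])%N -> (1 <= m)%N -> (3 <= #|A|)%N ->
  piQ (F:=F) (\sum_(L : {set 'I_m} | (L != set0) && (L \proper A))
        Qxpow (A :\: L) * QTr L) = 0
  /\
  (forall i j : 'I_m, is_ell A i -> is_ell (A :\ i) j ->
   forall L : {set 'I_m}, L != set0 -> L \proper A ->
     grevlex_le (lead_mono (piQ (F:=F) (Qxpow (A :\: L) * QTr L)))
                (xxy i j ((A :\ i) :\ j))
     /\
     (lead_term (piQ (F:=F) (Qxpow (A :\: L) * QTr L)) = 'X_[xxy i j ((A :\ i) :\ j)]
      <-> (A :\: L = [set i] \/ A :\: L = [set j]))).
Proof.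
move=> F2 _ A3; split.
  by apply: piQ_sum_xpow_Tr_proper => //; rewrite -cards_eq0 -lt0n (leq_trans _ A3).
move=> i j Ai Aj L L0 LA; have [l Ll] := exists_ell L0.
have LA' := proper_sub LA; have /is_ellP[lL _] := Ll.
rewrite piQ_xpow_Tr // (xxy_ymono Ai Aj).
rewrite (lead_mono_xpow_tr F2 LA' Ll) (lead_term_xpow_tr F2 LA' Ll); split.
  apply: grevlex_le_ymono_ell2 Ai Aj _ _ (card_setD_setD1 LA lL).
  exact: subset_trans (subD1set L l) LA'.
rewrite -(setD1_ell_eq Ai Aj LA' Ll).
by split=> [/mpolyX_inj/ymono_inj | ->].
Qed.
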